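(* In the Cucker–Smale setting below, for all $n\in\mathbb{N}_0$, $$d_V(t_{2n+2})\le\frac{e^{\tilde K(t_{2n+2}-t_{2n+1})}}{2-e^{\tilde K(t_{2n+2}-t_{2n+1})}}\,d_V(t_{2n+1}).$$
   Context: Setting: $N\ge2$; $\tilde\psi:\mathbb{R}\to\mathbb{R}$ positive, bounded, continuous, with $\tilde K:=\|\tilde\psi\|_\infty$ and $\int_0^\infty\min_{r\in[0,x]}\tilde\psi(r)dx=+\infty$; $\{t_n\}_{n\in\mathbb{N}_0}$ increasing, nonnegative, $t_0=0$, $t_n\to\infty$, with $t_{2n+2}-t_{2n+1}<\frac{\ln2}{\tilde K}$ and $t_{2n+1}-t_{2n}>\frac1{\tilde K}$ for all $n$, and $\sum_{p\ge0}\ln\frac{e^{\tilde K(t_{2p+2}-t_{2p+1})}}{2-e^{\tilde K(t_{2p+2}-t_{2p+1})}}<\infty$. $\alpha(0)=1$, $\alpha=1$ on $(t_{2n},t_{2n+1})$, $\alpha=-1$ on $[t_{2n+1},t_{2n+2}]$. $\{(x_i,v_i)\}$ solves $x_i'=v_i$, $v_i'(t)=\frac1{N-1}\sum_{j\ne i}\alpha(t)\tilde\psi(|x_i(t)-x_j(t)|)(v_j(t)-v_i(t))$, $t>0$, with given initial data in $\mathbb{R}^d$ (continuous, $C^1$ on each $(t_n,t_{n+1})$). $d_V(t):=\max_{i,j}|v_i(t)-v_j(t)|$. *)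

From Stdlib Require Import Reals Lra List.
From Coquelicot Require Import Coquelicot.
Import ListNotations.
Open Scope R_scope.

Definition sumR (l : list nat) (f : nat -> R) : R :=
  fold_right (fun j acc => f j + acc) 0 l.

Definition maxR (l : list nat) (f : nat -> R) : R :=
  fold_right (fun j acc => Rmax (f j) acc) 0 l.

(* A vector of R^d is represented by its coordinate function k |-> v k, k < d.
   Euclidean norm |v|. *)
Definition enorm (d : nat) (v : nat -> R) : R :=
  sqrt (sumR (seq 0 d) (fun k => v k ^ 2)).

(* |x_i(t) - x_j(t)| for a configuration x : particle -> coordinate -> time -> R *)
Definition edist (d : nat) (x : nat -> nat -> R -> R) (i j : nat) (t : R) : R :=
  enorm d (fun k => x i k t - x j k t).

Definition dV (N d : nat) (v : nat -> nat -> R -> R) (t : R) : R :=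
  maxR (seq 0 N) (fun i => maxR (seq 0 N) (fun j => edist d v i j t)).

(* min_{r in [0,x]} psi r (the infimum, attained since psi is continuous) *)
Definition psi_min (psi : R -> R) (x : R) : R :=
  real (Glb_Rbar (fun y => exists r, 0 <= r <= x /\ y = psi r)).

Definition cont_on_nonneg (f : R -> R) : Prop :=
  forall t, 0 <= t -> forall eps, 0 < eps -> exists delta, 0 < delta /\
    forall s, 0 <= s -> Rabs (s - t) < delta -> Rabs (f s - f t) < eps.

Definition gfac (K tau : R) : R := exp (K * tau) / (2 - exp (K * tau)).

From Stdlib Require Import Reals Lra Lia List.
From Coquelicot Require Import Coquelicot.
Open Scope R_scope.

(* On [t_{2n+1}, t_{2n+2}] there is no switching time, so every squared
   distance |v_i - v_j|^2 is differentiable there.  Each coupling weight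
   alpha psi has modulus at most K, so by |u.w| <= (|u|^2 + |w|^2)/2 that
   derivative is at most 4K times the squared velocity diameter.  A Gronwall
   argument for the maximum of finitely many functions then gives
   d_V(t_{2n+2}) <= e^{2K tau} d_V(t_{2n+1}) with tau = t_{2n+2} - t_{2n+1},
   and e^{2K tau} <= e^{K tau} / (2 - e^{K tau}) since y (2 - y) <= 1. *)

Lemma sumR_ext (l : list nat) (f g : nat -> R) :
  (forall x, In x l -> f x = g x) -> sumR l f = sumR l g.
Proof.
  induction l as [|a l IH]; intros H; simpl; [easy|].
  rewrite H, IH; [easy | intros; apply H; now right | now left].
Qed.

Lemma sumR_plus (l : list nat) (f g : nat -> R) :
  sumR l (fun x => f x + g x) = sumR l f + sumR l g.
Proof. induction l as [|a l IH]; simpl; [ring|]. rewrite IH; ring. Qed.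

Lemma sumR_scal (l : list nat) (c : R) (f : nat -> R) :
  sumR l (fun x => c * f x) = c * sumR l f.
Proof. induction l as [|a l IH]; simpl; [ring|]. rewrite IH; ring. Qed.

Lemma sumR_const (l : list nat) (c : R) : sumR l (fun _ => c) = INR (length l) * c.
Proof. induction l as [|a l IH]; simpl; [ring|]. rewrite IH; destruct (length l); simpl; ring. Qed.

Lemma sumR_comm (l1 l2 : list nat) (g : nat -> nat -> R) :
  sumR l1 (fun k => sumR l2 (g k)) = sumR l2 (fun m => sumR l1 (fun k => g k m)).
Proof.
  induction l1 as [|a l1 IH]; simpl.
  - induction l2 as [|b l2 IH2]; simpl; [easy|]. rewrite <- IH2; ring.
  - rewrite IH, <- sumR_plus. reflexivity.
Qed.

Lemma sumR_nonneg (l : list nat) (f : nat -> R) :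
  (forall x, In x l -> 0 <= f x) -> 0 <= sumR l f.
Proof.
  induction l as [|a l IH]; intros H; simpl; [lra|].
  apply Rplus_le_le_0_compat; [apply H; now left | apply IH; intros; apply H; now right].
Qed.

Lemma sumR_abs_le (l : list nat) (f g : nat -> R) :
  (forall x, In x l -> Rabs (f x) <= g x) -> Rabs (sumR l f) <= sumR l g.
Proof.
  induction l as [|a l IH]; intros H; simpl.
  - rewrite Rabs_R0; lra.
  - eapply Rle_trans; [apply Rabs_triang|].
    apply Rplus_le_compat; [apply H; now left | apply IH; intros; apply H; now right].
Qed.

Lemma abs_dot_le (l : list nat) (u w : nat -> R) :
  Rabs (sumR l (fun k => u k * w k))
  <= (sumR l (fun k => u k ^ 2) + sumR l (fun k => w k ^ 2)) / 2.
Proof.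
  replace ((sumR l (fun k => u k ^ 2) + sumR l (fun k => w k ^ 2)) / 2)
    with (sumR l (fun k => / 2 * (u k ^ 2 + w k ^ 2)))
    by (rewrite sumR_scal, sumR_plus; field).
  apply sumR_abs_le; intros k _.
  pose proof (pow2_ge_0 (u k - w k)); pose proof (pow2_ge_0 (u k + w k)).
  apply Rabs_le; split; nra.
Qed.

Lemma maxR_ge (l : list nat) (f : nat -> R) (x : nat) : In x l -> f x <= maxR l f.
Proof.
  induction l as [|a l IH]; simpl; intros H; [contradiction|].
  destruct H as [<-|H]; [apply Rmax_l | eapply Rle_trans; [apply IH, H | apply Rmax_r]].
Qed.

Lemma maxR_ext (l : list nat) (f g : nat -> R) :
  (forall x, In x l -> f x = g x) -> maxR l f = maxR l g.
Proof.
  induction l as [|a l IH]; intros H; simpl; [easy|].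
  rewrite H, IH; [easy | intros; apply H; now right | now left].
Qed.

Lemma maxR_nonneg (l : list nat) (f : nat -> R) : 0 <= maxR l f.
Proof. induction l as [|a l IH]; simpl; [lra|]. eapply Rle_trans; [apply IH | apply Rmax_r]. Qed.

Lemma maxR_lt (l : list nat) (f : nat -> R) (M : R) :
  0 < M -> (forall x, In x l -> f x < M) -> maxR l f < M.
Proof.
  induction l as [|a l IH]; intros HM H; simpl; [easy|].
  apply Rmax_lub_lt; [apply H; now left | apply IH; auto; intros; apply H; now right].
Qed.

Lemma maxR_sqrt (l : list nat) (f : nat -> R) :
  (forall x, In x l -> 0 <= f x) -> maxR l (fun x => sqrt (f x)) = sqrt (maxR l f).
Proof.
  induction l as [|a l IH]; intros H; simpl; [now rewrite sqrt_0|].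
  rewrite IH by (intros; apply H; now right).
  assert (Ha : 0 <= f a) by (apply H; now left).
  pose proof (maxR_nonneg l f).
  unfold Rmax. destruct (Rle_dec (sqrt (f a)) (sqrt (maxR l f))) as [Hs|Hs],
    (Rle_dec (f a) (maxR l f)) as [Hf|Hf]; try reflexivity.
  - apply Rnot_le_lt in Hf. pose proof (sqrt_lt_1_alt _ _ (conj H0 Hf)). lra.
  - apply Rnot_le_lt in Hs. apply sqrt_le_1_alt in Hf. lra.
Qed.

Lemma continuous_Rmax (f g : R -> R) (t : R) :
  continuous f t -> continuous g t -> continuous (fun s => Rmax (f s) (g s)) t.
Proof.
  intros Hf Hg.
  apply continuous_ext with (fun s => (f s + g s + Rabs (f s - g s)) / 2).
  { intros s. unfold Rmax. destruct (Rle_dec (f s) (g s)).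
    - rewrite Rabs_left1; lra.
    - rewrite Rabs_right; lra. }
  apply (continuous_mult (fun s => f s + g s + Rabs (f s - g s)) (fun _ => / 2));
    [|apply continuous_const].
  apply (continuous_plus (fun s => f s + g s)); [now apply (continuous_plus f g)|].
  apply continuous_Rabs_comp, (continuous_minus f g); auto.
Qed.

Lemma continuous_maxR (l : list nat) (g : nat -> R -> R) (t : R) :
  (forall x, In x l -> continuous (g x) t) -> continuous (fun s => maxR l (fun x => g x s)) t.
Proof.
  induction l as [|a l IH]; intros H; simpl; [apply continuous_const|].
  apply continuous_Rmax; [apply H; now left | apply IH; intros; apply H; now right].
Qed.

Lemma continuous_sumR (l : list nat) (g : nat -> R -> R) (t : R) :
  (forall x, In x l -> continuous (g x) t) -> continuous (fun s => sumR l (fun x => g x s)) t.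
Proof.
  induction l as [|a l IH]; intros H; simpl; [apply continuous_const|].
  apply (continuous_plus (g a)); [apply H; now left | apply IH; intros; apply H; now right].
Qed.

Lemma is_derive_sumR (l : list nat) (g : nat -> R -> R) (dg : nat -> R) (t : R) :
  (forall x, In x l -> is_derive (g x) t (dg x)) ->
  is_derive (fun s => sumR l (fun x => g x s)) t (sumR l dg).
Proof.
  induction l as [|a l IH]; intros H; simpl; [apply (is_derive_const 0)|].
  apply (is_derive_plus (g a)); [apply H; now left | apply IH; intros; apply H; now right].
Qed.

Lemma length_filter_neq (N i : nat) :
  (i < N)%nat -> length (filter (fun j => negb (Nat.eqb j i)) (seq 0 N)) = (N - 1)%nat.
Proof.
  enough (H : forall n, length (filter (fun j => negb (Nat.eqb j i)) (seq 0 n))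
                        = if Nat.ltb i n then (n - 1)%nat else n).
  { intros HiN. rewrite H. now apply Nat.ltb_lt in HiN as ->. }
  induction n as [|n IH]; [easy|].
  rewrite seq_S, filter_app, length_app, IH; simpl.
  destruct (Nat.ltb_spec i n), (Nat.eqb_spec n i), (Nat.ltb_spec i (S n)); simpl; lia.
Qed.

Lemma nonincreasing_of_derive_nonpos (f df : R -> R) (a b : R) :
  a <= b ->
  (forall x, a < x < b -> is_derive f x (df x)) ->
  (forall x, a < x < b -> df x <= 0) ->
  (forall x, a <= x <= b -> continuous f x) ->
  f b <= f a.
Proof.
  intros Hab Hd Hneg Hc.
  (* [Rmin (df x) 0] agrees with [df] inside, and is nonpositive also at the
     endpoints, where [MVT_gen] may place its point *)
  destruct (MVT_gen f a b (fun x => Rmin (df x) 0)) as [c [_ Hc_eq]];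
    rewrite ?Rmin_left, ?Rmax_right by lra.
  - intros x Hx. rewrite Rmin_left by (now apply Hneg). now apply Hd.
  - intros x Hx. now apply continuity_pt_filterlim, Hc.
  - pose proof (Rmin_r (df c) 0). nra.
Qed.

Lemma continuous_induction (h : R -> R) (a b : R) :
  a <= b ->
  (forall t, a <= t <= b -> continuous h t) ->
  (forall c, a <= c <= b -> (forall s, a <= s < c -> h s < 0) -> h c < 0) ->
  h b < 0.
Proof.
  intros Hab Hcont Hstep.
  set (E := fun t => a <= t <= b /\ forall s, a <= s <= t -> h s < 0).
  assert (Ea : E a).
  { split; [lra|]. intros s Hs. replace s with a by lra. apply Hstep; [lra|]. intros; lra. }
  destruct (completeness E) as [c [Hub Hlub]].
  { exists b. now intros t [Ht _]. }
  { now exists a. }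
  assert (Hac : a <= c) by now apply Hub.
  assert (Hcb : c <= b) by (apply Hlub; now intros t [Ht _]).
  assert (Hbelow : forall s, a <= s < c -> h s < 0).
  { intros s Hs. destruct (Rlt_dec (h s) 0) as [|Hns]; [easy|].
    enough (c <= s) by lra.
    apply Hlub. intros t [_ Ht]. destruct (Rle_dec t s) as [|Hts]; [easy|].
    exfalso. apply Hns, Ht. lra. }
  assert (Hc : h c < 0) by (apply Hstep; auto).
  destruct (Req_dec c b) as [<-|Hcb']; [easy|].
  destruct (Hcont c (conj Hac Hcb) _ (open_lt 0 (h c) Hc)) as [delta Hdelta].
  set (t' := Rmin (c + delta / 2) b).
  assert (Et' : E t').
  { pose proof (cond_pos delta).
    split; [split; [apply Rmin_glb; lra | apply Rmin_r]|].
    intros s Hs. unfold t' in Hs. destruct (Rlt_dec s c); [apply Hbelow; lra|].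
    apply Hdelta. change (Rabs (s - c) < delta).
    assert (s <= c + delta / 2) by (pose proof (Rmin_l (c + delta / 2) b); lra).
    rewrite Rabs_pos_eq; lra. }
  specialize (Hub t' Et'). revert Hub. unfold t'.
  apply Rmin_case; pose proof (cond_pos delta); lra.
Qed.

Section MaxFamilyGronwall.

Variables (I : Type) (S : I -> Prop) (f df : I -> R -> R) (F : R -> R) (C a b : R).
Hypothesis Hab : a <= b.
Hypothesis HC : 0 <= C.
Hypothesis HFa : 0 <= F a.
Hypothesis HF_cont : forall t, a <= t <= b -> continuous F t.
Hypothesis Hf_cont : forall m t, S m -> a <= t <= b -> continuous (f m) t.
Hypothesis Hf_der : forall m t, S m -> a < t < b -> is_derive (f m) t (df m t).
Hypothesis Hf_bound : forall m t, S m -> a < t < b -> df m t <= C * F t.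
Hypothesis Hf_le : forall m t, S m -> f m t <= F t.
Hypothesis HF_lt : forall t M, 0 < M -> (forall m, S m -> f m t < M) -> F t < M.

Lemma max_family_below_barrier (e : R) : 0 < e -> F b < (F a + e) * exp (C * (b - a)).
Proof.
  intros He.
  set (B := fun t => (F a + e) * exp (C * (t - a))).
  assert (HB_der : forall t, is_derive B t (C * B t)).
  { intros t. unfold B. auto_derive; [easy|]. unfold Rminus; ring. }
  assert (HB_cont : forall t, continuous B t).
  { intros t. apply (ex_derive_continuous (V := R_NormedModule)). eexists. apply HB_der. }
  assert (HB_pos : forall t, 0 < B t).
  { intros t. apply Rmult_lt_0_compat; [lra | apply exp_pos]. }
  enough (F b - B b < 0) by (unfold B in *; lra).
  apply (continuous_induction (fun t => F t - B t) a b Hab).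
  { intros t Ht. apply (continuous_minus F B); auto. }
  intros c Hc Hbelow.
  enough (forall m, S m -> f m c < B c) by (apply Rlt_minus, HF_lt; auto).
  intros m Hm.
  assert (Hdecr : f m c - B c <= f m a - B a).
  { apply (nonincreasing_of_derive_nonpos (fun t => f m t - B t)
             (fun t => df m t - C * B t)); [lra | | |].
    - intros t Ht. apply (is_derive_minus (f m) B); [apply Hf_der | apply HB_der]; auto; lra.
    - intros t Ht. pose proof (Hf_bound m t Hm ltac:(lra)).
      pose proof (Hbelow t ltac:(lra)). nra.
    - intros t Ht. apply (continuous_minus (f m) B); [apply Hf_cont | apply HB_cont]; auto; lra. }
  assert (B a = F a + e) by (unfold B; rewrite Rminus_diag, Rmult_0_r, exp_0; ring).
  pose proof (Hf_le m a Hm). lra.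
Qed.

Lemma max_family_gronwall : F b <= F a * exp (C * (b - a)).
Proof.
  apply Rle_plus_epsilon. intros eps Heps.
  set (X := exp (C * (b - a))).
  assert (HX : 0 < X) by apply exp_pos.
  pose proof (max_family_below_barrier (eps / X) ltac:(apply Rdiv_lt_0_compat; lra)) as Hb.
  replace ((F a + eps / X) * exp (C * (b - a))) with (F a * X + eps) in Hb
    by (unfold X; field; apply Rgt_not_eq, exp_pos).
  lra.
Qed.

End MaxFamilyGronwall.

Definition sqdist (d : nat) (V : nat -> nat -> R) (i j : nat) : R :=
  sumR (seq 0 d) (fun k => (V i k - V j k) ^ 2).

Definition sqdiam (N d : nat) (V : nat -> nat -> R) : R :=
  maxR (seq 0 N) (fun i => maxR (seq 0 N) (fun j => sqdist d V i j)).

Definition alignment (N : nat) (P V : nat -> nat -> R) (i k : nat) : R :=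
  / (INR N - 1) * sumR (filter (fun j => negb (Nat.eqb j i)) (seq 0 N))
                      (fun j => P i j * (V j k - V i k)).

Lemma sqdist_nonneg (d : nat) (V : nat -> nat -> R) (i j : nat) : 0 <= sqdist d V i j.
Proof. apply sumR_nonneg. intros k _. apply pow2_ge_0. Qed.

Lemma sqdist_le_sqdiam (N d : nat) (V : nat -> nat -> R) (i j : nat) :
  (i < N)%nat -> (j < N)%nat -> sqdist d V i j <= sqdiam N d V.
Proof.
  intros Hi Hj. unfold sqdiam.
  eapply Rle_trans; [| apply (maxR_ge _ (fun i => maxR _ (fun j => sqdist d V i j)) i)].
  - apply (maxR_ge _ (fun j => sqdist d V i j)). apply in_seq; lia.
  - apply in_seq; lia.
Qed.

Lemma sqdiam_lt (N d : nat) (V : nat -> nat -> R) (M : R) :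
  0 < M -> (forall i j, (i < N)%nat -> (j < N)%nat -> sqdist d V i j < M) -> sqdiam N d V < M.
Proof.
  intros HM H. apply maxR_lt; [easy|]. intros i Hi. apply maxR_lt; [easy|].
  intros j Hj. apply in_seq in Hi, Hj. apply H; lia.
Qed.

Lemma dV_sqrt_sqdiam (N d : nat) (v : nat -> nat -> R -> R) (t : R) :
  dV N d v t = sqrt (sqdiam N d (fun i k => v i k t)).
Proof.
  unfold dV, sqdiam. rewrite <- maxR_sqrt by (intros; apply maxR_nonneg).
  apply maxR_ext; intros i _.
  rewrite <- maxR_sqrt by (intros; apply sqdist_nonneg). reflexivity.
Qed.

Lemma abs_dot_alignment_le (N d : nat) (P V : nat -> nat -> R) (u : nat -> R) (K G : R)
    (i : nat) :
  (2 <= N)%nat -> (i < N)%nat ->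
  (forall j, (j < N)%nat -> Rabs (P i j) <= K) ->
  (forall j, (j < N)%nat -> sqdist d V j i <= G) ->
  sumR (seq 0 d) (fun k => u k ^ 2) <= G ->
  Rabs (sumR (seq 0 d) (fun k => u k * alignment N P V i k)) <= K * G.
Proof.
  intros HN Hi HP HV Hu.
  set (others := filter (fun j => negb (Nat.eqb j i)) (seq 0 N)).
  assert (Hothers : forall j, In j others -> (j < N)%nat).
  { intros j Hj. apply filter_In in Hj as [Hj _]. apply in_seq in Hj. lia. }
  assert (HN1 : 1 < INR N) by (apply (lt_INR 1); lia).
  replace (sumR (seq 0 d) (fun k => u k * alignment N P V i k))
    with (/ (INR N - 1) * sumR others
            (fun j => P i j * sumR (seq 0 d) (fun k => u k * (V j k - V i k)))).
  2:{ symmetry.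
      transitivity (/ (INR N - 1) * sumR (seq 0 d)
                      (fun k => sumR others (fun j => u k * (P i j * (V j k - V i k))))).
      - rewrite <- sumR_scal. apply sumR_ext. intros k _.
        unfold alignment. fold others. rewrite sumR_scal. ring.
      - rewrite sumR_comm. f_equal. apply sumR_ext. intros j _.
        rewrite <- sumR_scal. apply sumR_ext. intros k _. ring. }
  rewrite Rabs_mult, Rabs_pos_eq by (apply Rlt_le, Rinv_0_lt_compat; lra).
  apply Rmult_le_reg_l with (INR N - 1); [lra|].
  rewrite <- Rmult_assoc, Rinv_r, Rmult_1_l by lra.
  replace ((INR N - 1) * (K * G)) with (sumR others (fun _ => K * G)).
  2:{ rewrite sumR_const. unfold others. rewrite length_filter_neq, minus_INR by lia.
      simpl. ring. }
  apply sumR_abs_le. intros j Hj. rewrite Rabs_mult.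
  apply Rmult_le_compat; [apply Rabs_pos | apply Rabs_pos | apply HP, Hothers, Hj |].
  eapply Rle_trans; [apply abs_dot_le|].
  pose proof (HV j (Hothers j Hj)). unfold sqdist in *. lra.
Qed.

Lemma sqdist_alignment_derivative_le (N d : nat) (P V : nat -> nat -> R) (K : R) (i j : nat) :
  (2 <= N)%nat -> (i < N)%nat -> (j < N)%nat ->
  (forall p q, (p < N)%nat -> (q < N)%nat -> Rabs (P p q) <= K) ->
  sumR (seq 0 d) (fun k => 2 * (V i k - V j k) * (alignment N P V i k - alignment N P V j k))
  <= 4 * K * sqdiam N d V.
Proof.
  intros HN Hi Hj HP.
  set (u := fun k => V i k - V j k).
  assert (Hbound : forall m, (m < N)%nat ->
            Rabs (sumR (seq 0 d) (fun k => u k * alignment N P V m k)) <= K * sqdiam N d V).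
  { intros m Hm. apply abs_dot_alignment_le; auto.
    - intros q Hq. apply sqdist_le_sqdiam; auto.
    - apply (sqdist_le_sqdiam N d V i j); auto. }
  replace (sumR (seq 0 d) _)
    with (2 * sumR (seq 0 d) (fun k => u k * alignment N P V i k)
          + -2 * sumR (seq 0 d) (fun k => u k * alignment N P V j k)).
  2:{ rewrite <- !sumR_scal, <- sumR_plus. apply sumR_ext. intros k _. unfold u. ring. }
  pose proof (Rle_abs (sumR (seq 0 d) (fun k => u k * alignment N P V i k))).
  pose proof (Rabs_maj2 (sumR (seq 0 d) (fun k => u k * alignment N P V j k))).
  pose proof (Hbound i Hi). pose proof (Hbound j Hj). lra.
Qed.

Lemma continuous_sqdist (d : nat) (v : nat -> nat -> R -> R) (i j : nat) (t : R) :
  (forall k, (k < d)%nat -> continuous (v i k) t /\ continuous (v j k) t) ->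
  continuous (fun s => sqdist d (fun p l => v p l s) i j) t.
Proof.
  intros Hv. unfold sqdist.
  apply (continuous_sumR _ (fun k s => (v i k s - v j k s) ^ 2)).
  intros k Hk. apply in_seq in Hk. destruct (Hv k ltac:(lia)) as [Hi Hj].
  apply continuous_ext with (fun s => (v i k s - v j k s) * ((v i k s - v j k s) * 1));
    [intros; simpl; ring|].
  assert (Hdiff : continuous (fun s => v i k s - v j k s) t)
    by now apply (continuous_minus (v i k)).
  apply (continuous_mult (fun s => v i k s - v j k s)); [easy|].
  apply (continuous_mult (fun s => v i k s - v j k s)); [easy | apply continuous_const].
Qed.

Lemma is_derive_sqdist (d : nat) (v : nat -> nat -> R -> R) (w : nat -> nat -> R)
    (i j : nat) (t : R) :
  (forall k, (k < d)%nat -> is_derive (v i k) t (w i k) /\ is_derive (v j k) t (w j k)) ->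
  is_derive (fun s => sqdist d (fun p l => v p l s) i j) t
    (sumR (seq 0 d) (fun k => 2 * (v i k t - v j k t) * (w i k - w j k))).
Proof.
  intros Hv. unfold sqdist.
  apply (is_derive_sumR _ (fun k s => (v i k s - v j k s) ^ 2)).
  intros k Hk. apply in_seq in Hk. destruct (Hv k ltac:(lia)) as [Hi Hj].
  pose proof (is_derive_pow _ 2 _ _ (is_derive_minus (v i k) (v j k) t _ _ Hi Hj)) as Hsq.
  simpl in Hsq. replace (2 * (v i k t - v j k t) * (w i k - w j k))
    with ((1 + 1) * minus (w i k) (w j k) * ((v i k t - v j k t) * 1)); [exact Hsq|].
  unfold minus, plus, opp; simpl. ring.
Qed.

Section AlignmentFlow.

Variables (N d : nat) (K a b : R) (P : R -> nat -> nat -> R) (v : nat -> nat -> R -> R).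
Hypothesis HN : (2 <= N)%nat.
Hypothesis HK : 0 <= K.
Hypothesis Hab : a <= b.
Hypothesis Hv_cont : forall i k t, (i < N)%nat -> (k < d)%nat -> a <= t <= b ->
  continuous (v i k) t.
Hypothesis Hv_derive : forall i k t, (i < N)%nat -> (k < d)%nat -> a < t < b ->
  is_derive (v i k) t (alignment N (P t) (fun p l => v p l t) i k).
Hypothesis HP_bound : forall t p q, a < t < b -> (p < N)%nat -> (q < N)%nat ->
  Rabs (P t p q) <= K.

Let config (t : R) : nat -> nat -> R := fun p l => v p l t.

Lemma sqdiam_growth : sqdiam N d (config b) <= sqdiam N d (config a) * exp (4 * K * (b - a)).
Proof.
  apply (max_family_gronwall (nat * nat) (fun ij => (fst ij < N)%nat /\ (snd ij < N)%nat)
           (fun ij t => sqdist d (config t) (fst ij) (snd ij))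
           (fun ij t => sumR (seq 0 d) (fun k => 2 * (config t (fst ij) k - config t (snd ij) k) *
              (alignment N (P t) (config t) (fst ij) k - alignment N (P t) (config t) (snd ij) k)))
           (fun t => sqdiam N d (config t)));
    [easy | lra | apply maxR_nonneg | | | | | |].
  - intros t Ht. unfold sqdiam.
    apply (continuous_maxR _ (fun i s => maxR _ (fun j => sqdist d (config s) i j))).
    intros i Hi. apply (continuous_maxR _ (fun j s => sqdist d (config s) i j)).
    intros j Hj. apply in_seq in Hi, Hj.
    apply continuous_sqdist. intros k Hk. split; apply Hv_cont; auto; lia.
  - intros [i j] t [Hi Hj] Ht. apply continuous_sqdist.
    intros k Hk. split; apply Hv_cont; auto.
  - intros [i j] t [Hi Hj] Ht. apply is_derive_sqdist.
    intros k Hk. split; apply Hv_derive; auto.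
  - intros [i j] t [Hi Hj] Ht.
    apply (sqdist_alignment_derivative_le N d (P t) (config t)); auto.
  - intros [i j] t [Hi Hj]. now apply sqdist_le_sqdiam.
  - intros t M HM Hlt. apply sqdiam_lt; [easy|]. intros i j Hi Hj. now apply (Hlt (i, j)).
Qed.

Lemma dV_growth : dV N d v b <= exp (2 * K * (b - a)) * dV N d v a.
Proof.
  rewrite !dV_sqrt_sqdiam. fold (config a) (config b).
  replace (exp (2 * K * (b - a))) with (sqrt (exp (4 * K * (b - a)))).
  2:{ replace (4 * K * (b - a)) with (2 * K * (b - a) + 2 * K * (b - a)) by ring.
      rewrite exp_plus. apply sqrt_square. apply Rlt_le, exp_pos. }
  rewrite (Rmult_comm (sqrt _)), <- sqrt_mult_alt by apply maxR_nonneg.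
  apply sqrt_le_1_alt, sqdiam_growth.
Qed.

End AlignmentFlow.

Lemma continuous_of_cont_on_nonneg (g : R -> R) (t : R) :
  cont_on_nonneg g -> 0 < t -> continuous g t.
Proof.
  intros Hg Ht. apply filterlim_locally. intros eps.
  destruct (Hg t (Rlt_le _ _ Ht) eps (cond_pos eps)) as [delta [Hdelta Hclose]].
  assert (Hpos : 0 < Rmin delta t) by (apply Rmin_pos; lra).
  exists (mkposreal _ Hpos). intros s Hs.
  change (Rabs (s - t) < Rmin delta t) in Hs. change (Rabs (g s - g t) < eps).
  pose proof (Rmin_l delta t). pose proof (Rmin_r delta t).
  apply Hclose; [apply Rabs_def2 in Hs | ]; lra.
Qed.

Lemma strict_incr_lt (u : nat -> R) :
  (forall n, u n < u (S n)) -> forall m p, (m < p)%nat -> u m < u p.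
Proof.
  intros Hu m p Hmp. induction Hmp as [|p _ IH]; [apply Hu|].
  eapply Rlt_trans; [apply IH | apply Hu].
Qed.

Lemma strict_incr_not_between (u : nat -> R) :
  (forall n, u n < u (S n)) -> forall m t, u m < t < u (S m) -> forall p, t <> u p.
Proof.
  intros Hu m t Ht p ->.
  destruct (Nat.lt_trichotomy p m) as [Hp|[->|Hp]]; [| lra |].
  - pose proof (strict_incr_lt u Hu p m Hp). lra.
  - destruct (Nat.eq_dec p (S m)) as [->|Hp']; [lra|].
    pose proof (strict_incr_lt u Hu (S m) p ltac:(lia)). lra.
Qed.

Lemma exp_double_le_gfac (K tau : R) :
  0 < K -> tau < ln 2 / K -> exp (2 * K * tau) <= gfac K tau.
Proof.
  intros HK Htau.
  set (y := exp (K * tau)).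
  assert (Hy : 0 < y < 2).
  { split; [apply exp_pos|]. rewrite <- (exp_ln 2) by lra. apply exp_increasing.
    apply Rmult_lt_compat_l with (r := K) in Htau; [|easy].
    replace (K * (ln 2 / K)) with (ln 2) in Htau by (field; lra). easy. }
  replace (exp (2 * K * tau)) with (y * y)
    by (unfold y; rewrite <- exp_plus; f_equal; ring).
  unfold gfac. fold y.
  (* y / (2 - y) - y^2 = y (y - 1)^2 / (2 - y) *)
  apply Rmult_le_reg_r with (2 - y); [lra|].
  replace (y / (2 - y) * (2 - y)) with y by (field; lra).
  pose proof (pow2_ge_0 (y - 1)). nra.
Qed.

Theorem lemma7p10
  (N d : nat) (HN : (2 <= N)%nat)
  (psi : R -> R) (K : R)
  (Hpsi_pos : forall r, 0 < psi r)
  (Hpsi_cont : forall r, continuous psi r)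
  (HK : is_lub (fun y => exists r, y = psi r) K)
  (Hpsi_int : forall M, exists X, 0 < X /\ M < RInt (psi_min psi) 0 X)
  (tn : nat -> R)
  (Ht0 : tn O = 0)
  (Ht_incr : forall n, tn n < tn (S n))
  (Ht_nonneg : forall n, 0 <= tn n)
  (Ht_lim : is_lim_seq tn p_infty)
  (Ht_short : forall n, tn (2 * n + 2)%nat - tn (2 * n + 1)%nat < ln 2 / K)
  (Ht_long : forall n, tn (2 * n + 1)%nat - tn (2 * n)%nat > 1 / K)
  (Ht_sum : ex_series (fun p => ln (gfac K (tn (2 * p + 2)%nat - tn (2 * p + 1)%nat))))
  (alpha : R -> R)
  (Halpha0 : alpha 0 = 1)
  (Halpha_pos : forall n t, tn (2 * n)%nat < t < tn (2 * n + 1)%nat -> alpha t = 1)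
  (Halpha_neg : forall n t, tn (2 * n + 1)%nat <= t <= tn (2 * n + 2)%nat -> alpha t = -1)
  (x v : nat -> nat -> R -> R)
  (Hx_cont : forall i k, (i < N)%nat -> (k < d)%nat -> cont_on_nonneg (x i k))
  (Hv_cont : forall i k, (i < N)%nat -> (k < d)%nat -> cont_on_nonneg (v i k))
  (Hx_eq : forall i k t, (i < N)%nat -> (k < d)%nat -> 0 < t ->
     (forall m, t <> tn m) -> is_derive (x i k) t (v i k t))
  (Hv_eq : forall i k t, (i < N)%nat -> (k < d)%nat -> 0 < t ->
     (forall m, t <> tn m) ->
     is_derive (v i k) t
       (/ (INR N - 1) *
        sumR (filter (fun j => negb (Nat.eqb j i)) (seq 0 N))
          (fun j => alpha t * psi (edist d x i j t) * (v j k t - v i k t)))) :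
  forall n : nat,
    dV N d v (tn (2 * n + 2)%nat)
    <= gfac K (tn (2 * n + 2)%nat - tn (2 * n + 1)%nat) * dV N d v (tn (2 * n + 1)%nat).
Proof.
  intros n.
  set (a := tn (2 * n + 1)%nat). set (b := tn (2 * n + 2)%nat).
  assert (Hpsi_le : forall r, psi r <= K) by (intros r; apply HK; now exists r).
  assert (HKpos : 0 < K) by (pose proof (Hpsi_pos 0); pose proof (Hpsi_le 0); lra).
  assert (Hb : b = tn (S (2 * n + 1))) by (unfold b; f_equal; lia).
  assert (Hab : a < b) by (rewrite Hb; apply Ht_incr).
  assert (Ha : 0 < a) by (rewrite <- Ht0; apply strict_incr_lt; auto; lia).
  assert (Hgap : forall t, a < t < b -> forall m, t <> tn m)
    by (rewrite Hb; apply strict_incr_not_between, Ht_incr).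
  eapply Rle_trans.
  - apply (dV_growth N d K a b (fun t i j => alpha t * psi (edist d x i j t)) v HN); try lra.
    + intros i k t Hi Hk Ht. apply continuous_of_cont_on_nonneg; auto; lra.
    + intros i k t Hi Hk Ht. apply Hv_eq; auto; lra.
    + intros t p q Ht _ _. rewrite (Halpha_neg n t) by (unfold a, b in Ht; lra).
      rewrite Rabs_mult, Rabs_m1, Rmult_1_l, Rabs_pos_eq; auto using Rlt_le.
  - apply Rmult_le_compat_r; [apply maxR_nonneg|].
    apply exp_double_le_gfac; [easy | apply Ht_short].
Qed.
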